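(* For every integer $n>1$, the series $\sum_{k=1}^\infty c^*_n(k)/k$ converges, and $$\log\Phi^*_n(1)=\Lambda^*(n)=-\sum_{k=1}^\infty\frac{c^*_n(k)}{k}.$$
   Context: $\zeta_n=e^{2\pi i/n}$. $d\mid\mid n$ means $d\mid n$ and $\gcd(d,n/d)=1$; $(j,n)_*=\max\{d: d\mid j,\ d\mid\mid n\}$; $\Phi^*_n(x)=\prod_{1\le j\le n,\ (j,n)_*=1}(x-\zeta_n^j)$; $c^*_n(k)=\sum_{1\le j\le n,\ (j,n)_*=1}\zeta_n^{jk}$ is the unitary Ramanujan sum. $\Lambda^*(n)=a\log p$ if $n=p^a$ is a prime power ($a\ge1$), and $0$ otherwise. *)

From Stdlib Require Import Reals Arith List.
Import ListNotations.
Open Scope R_scope.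

Definition C : Type := (R * R)%type.
Definition C0 : C := (0, 0).
Definition C1 : C := (1, 0).
Definition Cadd (z w : C) : C := (fst z + fst w, snd z + snd w).
Definition Csub (z w : C) : C := (fst z - fst w, snd z - snd w).
Definition Cmul (z w : C) : C :=
  (fst z * fst w - snd z * snd w, fst z * snd w + snd z * fst w).

Definition zeta_pow (n m : nat) : C :=
  (cos (2 * PI * INR m / INR n), sin (2 * PI * INR m / INR n)).

Definition unitary_divb (d n : nat) : bool :=
  (Nat.eqb (n mod d) 0%nat && Nat.eqb (Nat.gcd d (n / d)) 1%nat)%bool.

(* (j,n)_* = max { d : d | j, d || n }; the candidates d lie in 1..n (n >= 1). *)
Definition ugcd (j n : nat) : nat :=
  fold_right Nat.max 0%nat
    (filter (fun d => (Nat.eqb (j mod d) 0%nat && unitary_divb d n)%bool) (seq 1 n)).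

Definition unitary_units (n : nat) : list nat :=
  filter (fun j => Nat.eqb (ugcd j n) 1%nat) (seq 1 n).

Definition cstar (n k : nat) : C :=
  fold_right Cadd C0 (map (fun j => zeta_pow n (j * k)%nat) (unitary_units n)).

Definition PhiStar_at1 (n : nat) : C :=
  fold_right Cmul C1 (map (fun j => Csub C1 (zeta_pow n j)) (unitary_units n)).

Definition primeb (p : nat) : bool :=
  (Nat.leb 2 p && forallb (fun d => negb (Nat.eqb (p mod d) 0%nat)) (seq 2 (p - 2)%nat))%bool.

(* Lambda*(n) = a log p if n = p^a (p prime, a >= 1), 0 otherwise.
   Written as a sum over all candidate pairs (p, a) with 2 <= p <= n, 1 <= a <= n;
   by uniqueness of the prime-power representation at most one term is nonzero. *)
Definition LambdaStar (n : nat) : R :=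
  fold_right Rplus 0
    (map (fun p =>
       fold_right Rplus 0
         (map (fun a =>
            if (primeb p && Nat.eqb n (p ^ a)%nat)%bool then INR a * ln (INR p) else 0)
            (seq 1 n)))
       (seq 2 n)).

(* partial sums sum_{k=1}^{N+1} of the real / imaginary parts of c*_n(k)/k *)
Definition cstar_series_re (n N : nat) : R :=
  sum_f_R0 (fun i => fst (cstar n (S i)) / INR (S i)) N.
Definition cstar_series_im (n N : nat) : R :=
  sum_f_R0 (fun i => snd (cstar n (S i)) / INR (S i)) N.

From Pilot Require Import Defs.
From Stdlib Require Import Reals Arith List Lra Lia.
From mathcomp Require all_boot all_order all_algebra Rstruct complex zify.
Open Scope R_scope.

(* The unitary gcd [(j,n)_*] is 1 exactly when no primary part [n_p = p^(v_p n)] of [n]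
   divides [j].  Since the primary parts are pairwise coprime, inclusion-exclusion over them
   turns every sum or product over the unitary units into an alternating combination, over
   the unitary divisors [D] of [n], of the same sum or product over the multiples of [D] in
   [1..n].  Those are classical: with [m = n/D], the geometric sum gives [m [m | k]] and the
   cyclotomic identity gives [prod_(0<i<m) (1 - zeta_m^i) = m].  Hence [c*_n(k)] and
   [Phi*_n(1)] are real, [Phi*_n(1) > 0], and both [log Phi*_n(1)] and, because
   [sum_(k<=N) m [m | k] / k = H(N/m) = H(N) - log m + o(1)], minus the sum of the series
   are the alternating combination of the [log (n/D)].  As [log] is additive, that
   combination vanishes as soon as [n] has two primary parts; otherwise it is [log n]. *)

(** * Angles and harmonic numbers *)

Lemma cos_neq1 x : 0 < x -> x < 2 * PI -> cos x <> 1.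
Proof.
  intros Hx0 Hx1 Hcos.
  replace x with (2 * (x / 2)) in Hcos by field.
  rewrite cos_2a_sin in Hcos.
  assert (0 < sin (x / 2)) by (apply sin_gt_0; lra).
  nra.
Qed.

Lemma angle_mul_bounds n k : (0 < k)%nat -> (k < n)%nat ->
  0 < INR k * (2 * PI / INR n) < 2 * PI.
Proof.
  intros Hk Hkn.
  assert (0 < INR k) by (apply lt_0_INR; lia).
  assert (INR k < INR n) by (apply lt_INR; lia).
  pose proof PI_RGT_0.
  replace (INR k * (2 * PI / INR n)) with (2 * PI * (INR k / INR n)) by (field; lra).
  assert (0 < INR k / INR n < 1).
  { split; [apply Rdiv_lt_0_compat; lra|].
    apply (Rmult_lt_reg_r (INR n)); [lra|]. field_simplify; lra. }
  nra.
Qed.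

Lemma angle_mulE n m : 2 * PI * INR m / INR n = INR m * (2 * PI / INR n).
Proof. unfold Rdiv. ring. Qed.

Lemma angle_mul_full n : (0 < n)%nat -> INR n * (2 * PI / INR n) = 2 * PI.
Proof. intros Hn. assert (0 < INR n) by (apply lt_0_INR; lia). field. lra. Qed.

Fixpoint harmonic (m : nat) : R :=
  match m with O => 0 | S k => harmonic k + / INR (S k) end.

Lemma harmonic_S k : harmonic (S k) = harmonic k + / INR (S k).
Proof. reflexivity. Qed.

Lemma ln_le_sub1 y : 0 < y -> ln y <= y - 1.
Proof. intros Hy. pose proof (exp_ineq1_le (ln y)) as H. rewrite exp_ln in H; lra. Qed.

Lemma ln_sub_ln_le x y : 0 < x -> 0 < y -> ln x - ln y <= x / y - 1.
Proof.
  intros Hx Hy.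
  replace (ln x - ln y) with (ln (x / y)) by (unfold Rdiv; rewrite ln_mult, ln_Rinv;
    auto using Rinv_0_lt_compat; lra).
  apply ln_le_sub1, Rdiv_lt_0_compat; auto.
Qed.

Lemma inv_le_ln_succ_sub k : (1 <= k)%nat -> / INR (S k) <= ln (INR (S k)) - ln (INR k).
Proof.
  intros Hk.
  assert (Hk0 : 0 < INR k) by (apply lt_0_INR; lia).
  pose proof (ln_sub_ln_le (INR k) (INR (S k)) Hk0 ltac:(apply lt_0_INR; lia)).
  rewrite S_INR in *.
  assert (INR k / (INR k + 1) - 1 = - / (INR k + 1)) by (field; lra).
  lra.
Qed.

Lemma ln_succ_sub_le_inv k : ln (INR (S (S k))) - ln (INR (S k)) <= / INR (S k).
Proof.
  assert (Hk0 : 0 < INR (S k)) by (apply lt_0_INR; lia).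
  pose proof (ln_sub_ln_le (INR (S (S k))) (INR (S k)) ltac:(apply lt_0_INR; lia) Hk0).
  rewrite (S_INR (S k)) in *.
  assert ((INR (S k) + 1) / INR (S k) - 1 = / INR (S k)) by (field; lra).
  lra.
Qed.

Lemma harmonic_sub_le_ln a d : (1 <= a)%nat ->
  harmonic (a + d) - harmonic a <= ln (INR (a + d)) - ln (INR a).
Proof.
  intros Ha. induction d as [|d IH].
  - rewrite Nat.add_0_r. lra.
  - replace (a + S d)%nat with (S (a + d)) by lia. rewrite harmonic_S.
    pose proof (inv_le_ln_succ_sub (a + d) ltac:(lia)). lra.
Qed.

Lemma ln_le_harmonic_sub a d :
  ln (INR (S (a + d))) - ln (INR (S a)) <= harmonic (a + d) - harmonic a.
Proof.
  induction d as [|d IH].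
  - rewrite Nat.add_0_r. lra.
  - replace (a + S d)%nat with (S (a + d)) by lia. rewrite harmonic_S.
    pose proof (ln_succ_sub_le_inv (a + d)). lra.
Qed.

Lemma ln_sub_ln_mul_lt_inv A M B : 0 < A -> 0 < M -> 0 < B ->
  B < (A + 1) * M -> ln B - ln (A * M) < / A.
Proof.
  intros HA HM HB HBA.
  pose proof (ln_sub_ln_le B (A * M) HB ltac:(nra)).
  assert (B / (A * M) < (A + 1) * M / (A * M)).
  { apply Rmult_lt_compat_r; auto. apply Rinv_0_lt_compat; nra. }
  assert ((A + 1) * M / (A * M) = 1 + / A) by (field; lra).
  lra.
Qed.

Lemma ln_mul_sub_ln_lt_inv A M B : 0 < A -> 0 < M ->
  A * M <= B -> ln (M * (A + 1)) - ln (B + 1) < / A.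
Proof.
  intros HA HM HAB.
  pose proof (ln_sub_ln_le (M * (A + 1)) (B + 1) ltac:(nra) ltac:(nra)).
  assert (M * (A + 1) / (B + 1) <= M * (A + 1) / (A * M + 1)).
  { apply Rmult_le_compat_l; [nra|]. apply Rinv_le_contravar; nra. }
  assert (M * (A + 1) / (A * M + 1) - 1 < / A).
  { apply (Rmult_lt_reg_r (A * (A * M + 1))); [nra|].
    replace ((M * (A + 1) / (A * M + 1) - 1) * (A * (A * M + 1))) with ((M - 1) * A)
      by (field; nra).
    replace (/ A * (A * (A * M + 1))) with (A * M + 1) by (field; nra).
    nra. }
  lra.
Qed.

(* [harmonic a - harmonic b] is squeezed between two differences of logarithms, each
   within [/ a] of [- ln m] when [a = b / m] (integer division). *)
Lemma harmonic_div_bound m a b : (0 < m)%nat -> (1 <= a)%nat ->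
  (a * m <= b)%nat -> (b < (a + 1) * m)%nat ->
  Rabs (harmonic a - harmonic b + ln (INR m)) < / INR a.
Proof.
  intros Hm Ha Hab Hba.
  pose proof (harmonic_sub_le_ln a (b - a) Ha) as Hup.
  pose proof (ln_le_harmonic_sub a (b - a)) as Hlo.
  replace (a + (b - a))%nat with b in Hup, Hlo by nia.
  set (A := INR a) in *. set (B := INR b) in *. set (M := INR m).
  assert (HA : 0 < A) by (apply lt_0_INR; lia).
  assert (HM : 0 < M) by (apply lt_0_INR; lia).
  assert (HAB : A * M <= B) by (unfold A, M, B; rewrite <- mult_INR; apply le_INR; auto).
  assert (HBA : B < (A + 1) * M).
  { unfold A, M, B. rewrite <- S_INR, <- mult_INR. apply lt_INR. lia. }
  assert (HB : 0 < B) by nra.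
  rewrite !S_INR in Hlo. fold A B in Hlo.
  pose proof (ln_sub_ln_mul_lt_inv A M B HA HM HB HBA) as U.
  pose proof (ln_mul_sub_ln_lt_inv A M B HA HM HAB) as L.
  rewrite ln_mult in U, L by nra.
  apply Rabs_def1; lra.
Qed.

Lemma harmonic_div_cv m (a : nat -> nat) : (0 < m)%nat ->
  (forall N, (a N * m <= S N)%nat /\ (S N < (a N + 1) * m)%nat) ->
  Un_cv (fun N => harmonic (a N) - harmonic (S N)) (- ln (INR m)).
Proof.
  intros Hm Ha eps Heps.
  destruct (archimed_cor1 eps Heps) as [K [HK HK0]].
  exists (K * m)%nat. intros N HN. unfold R_dist.
  destruct (Ha N) as [H1 H2].
  assert (HaK : (K <= a N)%nat) by nia.
  assert (Hinv : / INR (a N) <= / INR K)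
    by (apply Rinv_le_contravar; [apply lt_0_INR; lia | apply le_INR; lia]).
  pose proof (harmonic_div_bound m (a N) (S N) Hm ltac:(lia) H1 H2).
  replace (harmonic (a N) - harmonic (S N) - - ln (INR m))
    with (harmonic (a N) - harmonic (S N) + ln (INR m)) by ring.
  lra.
Qed.

Module UnitaryRamanujan.
Import all_boot all_order all_algebra Rstruct complex zify.
Import Order.TTheory GRing.Theory Num.Theory.
Local Open Scope ring_scope.

Lemma list_seqE a b : List.seq a b = iota a b.
Proof. by elim: b a => [|b IH] a //=; rewrite IH. Qed.

Lemma list_filterE T (f : T -> bool) s : List.filter f s = filter f s.
Proof. by elim: s => [|x s IH] //=; rewrite IH. Qed.

Lemma fold_rightE T U (f : T -> U -> U) x s : fold_right f x s = foldr f x s.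
Proof. by elim: s => [|y s IH] //=; rewrite IH. Qed.

Lemma forallbE T (f : T -> bool) s : forallb f s = all f s.
Proof. by elim: s => [|x s IH] //=; rewrite IH. Qed.

Lemma fold_right_RplusE T (s : list T) (f : T -> R) :
  fold_right Rplus 0%R (List.map f s) = \sum_(x <- s) f x.
Proof. by elim: s => [|x s IH]; rewrite ?big_nil ?big_cons //= IH RplusE. Qed.

Lemma Nat_eqbE a b : Nat.eqb a b = (a == b).
Proof. by case: (Nat.eqb_spec a b) => [->|/eqP/negbTE ->]; rewrite ?eqxx. Qed.

Lemma Nat_lebE a b : Nat.leb a b = (a <= b)%N.
Proof. by apply/idP/idP => [/Nat.leb_le/ssrnat.leP|/ssrnat.leP/Nat.leb_le]. Qed.

Lemma Nat_maxE a b : Nat.max a b = maxn a b.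
Proof. lia. Qed.

Lemma Nat_powE a b : Nat.pow a b = (a ^ b)%N.
Proof. by elim: b => [|b IH] //=; rewrite expnS IH. Qed.

Lemma Nat_modE a b : Nat.modulo a b = (a %% b)%N.
Proof.
case: b => [|b]; first by rewrite modn0.
symmetry; apply: (Nat.mod_unique a b.+1 (a %/ b.+1)%N (a %% b.+1)%N).
  by apply/ssrnat.ltP; rewrite ltn_mod.
by rewrite {1}(divn_eq a b.+1) mulnC.
Qed.

Lemma Nat_divE a b : Nat.div a b = (a %/ b)%N.
Proof.
case: b => [|b]; first by rewrite divn0.
symmetry; apply: (Nat.div_unique a b.+1 (a %/ b.+1)%N (a %% b.+1)%N).
  by apply/ssrnat.ltP; rewrite ltn_mod.
by rewrite {1}(divn_eq a b.+1) mulnC.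
Qed.

Lemma Nat_divideE a b : Nat.divide a b <-> (a %| b)%N.
Proof. by split=> [[z ->]|/dvdnP[z ->]]; [apply: dvdn_mull | exists z]. Qed.

Lemma Nat_gcdE a b : Nat.gcd a b = gcdn a b.
Proof.
apply: Nat.gcd_unique.
- by apply/Nat_divideE; apply: dvdn_gcdl.
- by apply/Nat_divideE; apply: dvdn_gcdr.
- by move=> q /Nat_divideE H1 /Nat_divideE H2; apply/Nat_divideE; rewrite dvdn_gcd H1 H2.
Qed.

Lemma Nat_mod_eq0E j d : Nat.eqb (Nat.modulo j d) 0 = (d %| j)%N.
Proof. by rewrite Nat_eqbE Nat_modE. Qed.

Lemma primebE p : primeb p = prime p.
Proof.
rewrite /primeb Nat_lebE forallbE list_seqE.
rewrite (eq_all (a2 := fun d => ~~ (d %| p)%N)); last by move=> d; rewrite /= Nat_mod_eq0E.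
apply/idP/primeP.
- case/andP=> p2 /allP H; split => // d dp.
  have p0 : (0 < p)%N by apply: leq_trans p2.
  have dle : (d <= p)%N by apply: dvdn_leq.
  have d0 : (0 < d)%N by apply: dvdn_gt0 p0 dp.
  apply/orP; case: (ltnP 1 d) => d1; last by left; apply/eqP; lia.
  right; rewrite eqn_leq dle leqNgt /=; apply/negP => dlt.
  have : d \in iota 2 (p - 2) by rewrite mem_iota; apply/andP; split; lia.
  by move/H; rewrite dp.
- case=> p1 H; rewrite p1 /=; apply/allP => d; rewrite mem_iota => /andP[d2 dlt].
  by apply/negP => dp; case/pred2P: (H d dp) => dE; lia.
Qed.

Definition unitary_dvdn d n := (d %| n)%N && coprime d (n %/ d).

Definition primary_parts n := map (fun p : nat => n`_p)%N (primes n).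

Lemma ugcdE j n : ugcd j n = \max_(d <- iota 1 n | (d %| j)%N && unitary_dvdn d n) d.
Proof.
rewrite -big_filter /ugcd list_seqE fold_rightE list_filterE.
rewrite (eq_filter (a2 := fun d => (d %| j)%N && unitary_dvdn d n)); last first.
  by move=> d; rewrite /unitary_divb !Nat_mod_eq0E Nat_eqbE Nat_divE Nat_gcdE.
by elim: (filter _ _) => [|x s IH]; rewrite ?big_nil ?big_cons //= IH Nat_maxE.
Qed.

Lemma unitary_dvdn_part pi n : (0 < n)%N -> unitary_dvdn n`_pi n.
Proof.
move=> n0; rewrite /unitary_dvdn dvdn_part.
have -> : (n %/ n`_pi = n`_pi^')%N by rewrite -{1}(partnC pi n0) mulKn ?part_gt0.
exact: coprime_partC.
Qed.

(* The smallest prime factor [p] of a unitary divisor [d > 1] of [n] has the same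
   multiplicity in [d] as in [n]. *)
Lemma unitary_dvdn_exists_part d n : (0 < n)%N -> unitary_dvdn d n -> (1 < d)%N ->
  exists2 p, p \in primes n & (n`_p %| d)%N.
Proof.
move=> n0 /andP[dn cop] d1; set p := pdiv d.
have pp : prime p by apply: pdiv_prime.
have pd : (p %| d)%N by apply: pdiv_dvd.
have d0 : (0 < d)%N by apply: ltnW.
have nd0 : (0 < n %/ d)%N by rewrite divn_gt0 // dvdn_leq.
exists p; first by rewrite mem_primes pp n0 (dvdn_trans pd dn).
rewrite p_part -{1}(divnK dn) lognM // (logn_coprime (coprime_dvdl pd cop)) add0n -p_part.
exact: dvdn_part.
Qed.

Lemma ugcd_eq1 j n : (0 < n)%N ->
  (ugcd j n == 1%N) = all (fun q => ~~ (q %| j)%N) (primary_parts n).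
Proof.
move=> n0; rewrite ugcdE eqn_leq (@leq_bigmax_seq _ _ _ (fun d => d) 1%N); first last.
- by rewrite dvd1n /unitary_dvdn dvd1n coprime1n.
- by rewrite mem_iota /= add1n ltnS.
rewrite andbT; apply/bigmax_leqP_seq/allP => [Hmax _ /mapP[p pP ->]|Hparts d _].
  apply/negP => Hpj; have pp : prime p by move: pP; rewrite mem_primes => /andP[].
  have np_iota : (n`_p \in iota 1 n)%N.
    by rewrite mem_iota part_gt0 add1n ltnS dvdn_leq ?dvdn_part.
  have := Hmax _ np_iota; rewrite Hpj unitary_dvdn_part // => /(_ isT).
  by rewrite leqNgt p_part_gt1 pP.
case/andP=> dj /(unitary_dvdn_exists_part _ _ n0) Hd; rewrite leqNgt; apply/negP.
case/Hd=> p pP /dvdn_trans/(_ dj) Hpj.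
by have := Hparts _ (map_f _ pP); rewrite Hpj.
Qed.

Lemma primary_parts_dvdn n q : q \in primary_parts n -> (q %| n)%N.
Proof. by case/mapP=> p _ ->; apply: dvdn_part. Qed.

Lemma primary_parts_neq_nil {n} : (1 < n)%N -> primary_parts n <> [::].
Proof.
by move=> n1; case E: (primes n) (primes_eq0 n) => //; rewrite /primary_parts E ltnNge n1.
Qed.

Lemma all_coprimeM D q L :
  all (coprime D) L -> all (coprime q) L -> all (coprime (D * q)) L.
Proof. by move=> /allP HD /allP Hq; apply/allP => x Hx; rewrite coprimeMl HD ?Hq. Qed.

(** * Inclusion-exclusion over pairwise coprime divisors *)

(* Inclusion-exclusion over the sub-lists [S] of [L]: for [op] a subtraction (resp.
   a division), [sieve op L D F] is the alternating sum (resp. product) of the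
   [F (D * \prod_(q <- S) q)]. *)
Fixpoint sieve {T : Type} (op : T -> T -> T) (L : seq nat) (D : nat) (F : nat -> T) : T :=
  if L is q :: L' then op (sieve op L' D F) (sieve op L' (D * q) F) else F D.

Definition admissible n L D :=
  [&& pairwise coprime L, all (coprime D) L, (D %| n)%N & all (fun q => q %| n)%N L].

Lemma admissible_primary_parts {n} : (0 < n)%N -> admissible n (primary_parts n) 1.
Proof.
move=> n0; apply/and4P; split; last 2 first.
- exact: dvd1n.
- by apply/allP => q; apply: primary_parts_dvdn.
- rewrite /primary_parts pairwise_map.
  have := primes_uniq n; rewrite uniq_pairwise.
  apply: sub_in_pairwise (fun p => p \in primes n) _ _ _ _ _; last by apply/allP.
  move=> p p' pP p'P /= ne; rewrite !p_part; apply: coprimeXl; apply: coprimeXr.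
  have pp : prime p by move: pP; rewrite mem_primes => /andP[].
  have pp' : prime p' by move: p'P; rewrite mem_primes => /andP[].
  by rewrite prime_coprime // dvdn_prime2.
- by apply/allP => q _; apply: coprime1n.
Qed.

Lemma admissible_cons n q L D :
  admissible n (q :: L) D -> admissible n L D /\ admissible n L (D * q).
Proof.
rewrite /admissible /= => /and4P[/andP[Hq HL] /andP[HDq HDL] HDn /andP[Hqn HLn]].
by split; rewrite ?HL ?HDL ?HDn ?HLn ?all_coprimeM ?Gauss_dvd ?HDn ?Hqn.
Qed.

Lemma eq_in_sieve {n T op L D} (F G : nat -> T) : admissible n L D ->
  (forall x, (x %| n)%N -> F x = G x) -> sieve op L D F = sieve op L D G.
Proof.
elim: L D => [|q L IH] D /=; first by move=> /and4P[_ _ HD _] H; apply: H.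
by move=> /admissible_cons[H1 H2] H; rewrite (IH _ H1 H) (IH _ H2 H).
Qed.

Lemma sieve_morph n T1 T2 op1 op2 (f : T1 -> T2) (P : T1 -> Prop) L D F :
  admissible n L D -> (forall x, (x %| n)%N -> P (F x)) ->
  (forall a b, P a -> P b -> P (op1 a b) /\ f (op1 a b) = op2 (f a) (f b)) ->
  P (sieve op1 L D F) /\ f (sieve op1 L D F) = sieve op2 L D (fun x => f (F x)).
Proof.
move=> + HF Hop; elim: L D => [|q L IH] D /=.
  by move=> /and4P[_ _ HD _]; split => //; apply: HF.
move=> /admissible_cons[/IH[P1 E1] /IH[P2 E2]].
by have [Pop Eop] := Hop _ _ P1 P2; split => //; rewrite Eop E1 E2.
Qed.

Lemma sieve_mul_base T op L D c (F : nat -> T) :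
  sieve op L (D * c) F = sieve op L D (fun x => F (x * c)%N).
Proof. by elim: L D => [|q L IH] D //=; rewrite mulnAC !IH. Qed.

Lemma sum_undivided_sieve (V : zmodType) (s : seq nat) L D (f : nat -> V) :
  pairwise coprime L -> all (coprime D) L ->
  \sum_(j <- s | (D %| j)%N && all (fun q => ~~ (q %| j)%N) L) f j =
  sieve (fun a b => a - b) L D (fun D => \sum_(j <- s | (D %| j)%N) f j).
Proof.
elim: L D => [|q L IH] D /=; first by move=> _ _; apply: eq_bigl => j; rewrite andbT.
move=> /andP[Hq HL] /andP[HDq HDL].
rewrite -IH // -IH ?all_coprimeM //.
rewrite [X in _ = X - _](bigID (fun j => (q %| j)%N)) /=.
rewrite [X in _ = X + _ - _](_ : _ = \sum_(j <- s | (D * q %| j)%N &&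
    all (fun q => ~~ (q %| j)%N) L) f j); last first.
  by apply: eq_bigl => j; rewrite Gauss_dvd // andbAC.
by rewrite addrAC subrr add0r; apply: eq_bigl => j; rewrite andbA andbAC.
Qed.

Lemma prod_undivided_sieve (K : fieldType) (s : seq nat) L D (f : nat -> K) :
  (forall j, j \in s -> f j != 0) -> pairwise coprime L -> all (coprime D) L ->
  \prod_(j <- s | (D %| j)%N && all (fun q => ~~ (q %| j)%N) L) f j =
  sieve (fun a b => a / b) L D (fun D => \prod_(j <- s | (D %| j)%N) f j).
Proof.
move=> Hf; elim: L D => [|q L IH] D /=.
  by move=> _ _; apply: eq_bigl => j; rewrite andbT.
move=> /andP[Hq HL] /andP[HDq HDL].
rewrite -IH // -IH ?all_coprimeM //.
rewrite [X in _ = X / _](bigID (fun j => (q %| j)%N)) /=.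
rewrite [X in _ = X * _ / _](_ : _ = \prod_(j <- s | (D * q %| j)%N &&
    all (fun q => ~~ (q %| j)%N) L) f j); last first.
  by apply: eq_bigl => j; rewrite Gauss_dvd // andbAC.
rewrite mulrAC divff ?mul1r; first by apply: eq_bigl => j; rewrite andbA andbAC.
by rewrite prodf_seq_neq0; apply/allP => j Hj; apply/implyP => _; exact: Hf.
Qed.

Section SieveSub.
Variable V : zmodType.
Local Notation subr := (fun a b : V => a - b).

Lemma sieve_sub_const L D (c : V) :
  sieve subr L D (fun _ => c) = if L is [::] then c else 0.
Proof. by elim: L D => [|q L IH] D //=; rewrite !IH subrr. Qed.

Lemma sieve_subD L D (F G : nat -> V) :
  sieve subr L D (fun x => F x + G x) = sieve subr L D F + sieve subr L D G.
Proof. by elim: L D => [|q L IH] D //=; rewrite !IH opprD addrACA. Qed.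

Lemma sieve_subN L D (F : nat -> V) :
  sieve subr L D (fun x => - F x) = - sieve subr L D F.
Proof. by elim: L D => [|q L IH] D //=; rewrite !IH opprB opprK addrC. Qed.

End SieveSub.

Lemma sieve_sub_additive {V : zmodType} {n q L D} (F : nat -> V) :
  admissible n (q :: L) D -> L != [::] ->
  (forall x, (x %| n)%N -> F (x * q)%N = F x + F q) ->
  sieve (fun a b => a - b) (q :: L) D F = 0.
Proof.
move=> /admissible_cons[adm _] L0 HF /=.
rewrite sieve_mul_base (eq_in_sieve _ _ adm HF) sieve_subD sieve_sub_const.
by case: L L0 adm {HF} => // *; rewrite addr0 subrr.
Qed.

Lemma sieve_raddf (U V : zmodType) (f : {additive U -> V}) L D F :
  f (sieve (fun a b => a - b) L D F) = sieve (fun a b => a - b) L D (fun x => f (F x)).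
Proof. by elim: L D => [|q L IH] D //=; rewrite raddfB !IH. Qed.

Lemma sieve_fmorph (K K' : fieldType) (f : {rmorphism K -> K'}) L D F :
  f (sieve (fun a b => a / b) L D F) = sieve (fun a b => a / b) L D (fun x => f (F x)).
Proof. by elim: L D => [|q L IH] D //=; rewrite fmorph_div !IH. Qed.

Local Notation subR := (fun a b : R => a - b).

Lemma sieve_subMr L D (F : nat -> R) c :
  sieve subR L D (fun x => F x * c) = sieve subR L D F * c.
Proof. by elim: L D => [|q L IH] D //=; rewrite !IH mulrBl. Qed.

Lemma sieve_sub_sum_f_R0 L D (F : nat -> nat -> R) N :
  sieve subR L D (fun x => sum_f_R0 (fun i => F i x) N) =
  sum_f_R0 (fun i => sieve subR L D (F i)) N.
Proof. by elim: N => [|N IH] //=; rewrite RplusE sieve_subD IH. Qed.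

Lemma sieve_sub_cv {n L D} (F : nat -> nat -> R) (G : nat -> R) : admissible n L D ->
  (forall x, (x %| n)%N -> Un_cv (fun N => F N x) (G x)) ->
  Un_cv (fun N => sieve subR L D (F N)) (sieve subR L D G).
Proof.
elim: L D => [|q L IH] D /=; first by move=> /and4P[_ _ HD _] H; apply: H.
move=> /admissible_cons[H1 H2] H.
exact: (CV_minus _ _ _ _ (IH _ H1 H) (IH _ H2 H)).
Qed.

(** * Roots of unity *)

Definition toC (z : Defs.C) : R[i] := Complex z.1 z.2.

Lemma toC_add z w : toC (Cadd z w) = toC z + toC w.
Proof. by case: z => a b; case: w => c d; rewrite /toC /Cadd /= !RplusE. Qed.

Lemma toC_sub z w : toC (Csub z w) = toC z - toC w.
Proof. by case: z => a b; case: w => c d; rewrite /toC /Csub /= !RminusE. Qed.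

Lemma toC_mul z w : toC (Cmul z w) = toC z * toC w.
Proof.
by case: z => a b; case: w => c d; rewrite /toC /Cmul /= RminusE !RmultE RplusE.
Qed.

Lemma toC1 : toC Defs.C1 = 1.
Proof. by []. Qed.

Lemma toC_fold_Cadd T (s : list T) (f : T -> Defs.C) :
  toC (fold_right Cadd Defs.C0 (List.map f s)) = \sum_(j <- s) toC (f j).
Proof. by elim: s => [|x s IH]; rewrite ?big_nil ?big_cons //= toC_add IH. Qed.

Lemma toC_fold_Cmul T (s : list T) (f : T -> Defs.C) :
  toC (fold_right Cmul Defs.C1 (List.map f s)) = \prod_(j <- s) toC (f j).
Proof. by elim: s => [|x s IH]; rewrite ?big_nil ?big_cons //= toC_mul IH. Qed.

Definition cis (x : R) : R[i] := Complex (cos x) (sin x).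

Lemma cisD a b : cis (Rplus a b) = cis a * cis b.
Proof.
rewrite /cis cos_plus sin_plus Rplus_comm.
exact: (toC_mul (cos a, sin a) (cos b, sin b)).
Qed.

Lemma cisMn x m : cis (Rmult (INR m) x) = cis x ^+ m.
Proof.
elim: m => [|m IH]; first by rewrite /= Rmult_0_l /cis cos_0 sin_0.
by rewrite S_INR Rmult_plus_distr_r Rmult_1_l cisD IH exprSr.
Qed.

Definition zeta n := cis (Rdiv (Rmult 2 PI) (INR n)).

Lemma toC_zeta_pow n m : toC (zeta_pow n m) = zeta n ^+ m.
Proof. by rewrite /toC /zeta_pow /= angle_mulE -cisMn. Qed.

Lemma zeta_prim_root {n} : (0 < n)%N -> n.-primitive_root (zeta n).
Proof.
move=> n0; apply/andP; split => //; apply/forallP => i.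
rewrite unity_rootE -cisMn.
have [->|ne] := eqVneq i.+1 n.
  by rewrite angle_mul_full /cis ?cos_2PI ?sin_2PI ?eqxx //; apply/ssrnat.ltP.
have lt : (i.+1 < n)%N by rewrite ltn_neqAle ne ltn_ord.
rewrite eqbF_neg; apply/eqP => /(congr1 (@complex.Re _)) /=.
have [H1 H2] := angle_mul_bounds n i.+1 (ssrnat.ltP (ltn0Sn i)) (ssrnat.ltP lt).
exact: cos_neq1 H1 H2.
Qed.

Lemma zeta_exp_prim_root {n D} : (0 < n)%N -> (D %| n)%N ->
  (n %/ D).-primitive_root (zeta n ^+ D).
Proof.
move=> n0 Dn; have := dvdn_prim_root (zeta_prim_root n0) (dvdn_div Dn).
by rewrite divnA // mulKn.
Qed.

Lemma big_iota1 (T : Type) (idx : T) (op : Monoid.law idx) m (F : nat -> T) :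
  \big[op/idx]_(i <- iota 1 m) F i = \big[op/idx]_(i < m) F i.+1.
Proof.
have -> : iota 1 m = map (addn 1) (iota 0 m) by rewrite -iotaDl.
have -> : iota 0 m = index_iota 0 m by rewrite /index_iota subn0.
by rewrite big_map big_mkord.
Qed.

Lemma sum_prim_root_expM (K : fieldType) (u : K) m k : m.-primitive_root u ->
  \sum_(i <- iota 1 m) u ^+ (i * k) = if (m %| k)%N then m%:R else 0.
Proof.
move=> Hu; set v := u ^+ k.
have -> : \sum_(i <- iota 1 m) u ^+ (i * k) = v * \sum_(i < m) v ^+ i.
  by rewrite big_iota1 mulr_sumr; apply: eq_bigr => i _; rewrite mulnC exprM -exprS.
rewrite (prim_order_dvd Hu) -/v; case: ifP => [/eqP->|v1].
  by under eq_bigr do rewrite expr1n; rewrite mul1r sumr_const card_ord.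
have vm : v ^+ m = 1 by rewrite /v -exprM mulnC exprM (prim_expr_order Hu) expr1n.
have : (v - 1) * \sum_(i < m) v ^+ i = 0 by rewrite -subrX1 vm subrr.
by move/eqP; rewrite mulf_eq0 subr_eq0 v1 /= => /eqP ->; rewrite mulr0.
Qed.

(* Evaluate [X^m - 1 = (X - 1) \prod_(0 < i < m) (X - u^i)] after cancelling [X - 1]. *)
Lemma prod_one_sub_prim_root_exp (K : fieldType) (u : K) m : m.-primitive_root u ->
  \prod_(i <- iota 1 m.-1) (1 - u ^+ i) = m%:R.
Proof.
move=> Hu; have := factor_Xn_sub_1 Hu.
case: m Hu (prim_order_gt0 Hu) => [//|m] Hu _ /=.
rewrite big_nat_recl // expr0 subrX1.
move/(mulfI (negbT (polyXsubC_eq0 1))) => /(congr1 (fun p => p.[1])).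
rewrite horner_prod horner_sum /=.
under eq_bigr do rewrite hornerXsubC.
under [X in _ = X]eq_bigr do rewrite hornerXn expr1n.
by rewrite sumr_const card_ord big_iota1 big_mkord => ->.
Qed.

Lemma filter_dvdn_iota D k : (0 < D)%N ->
  filter (dvdn D) (iota 1 k) = map (muln D) (iota 1 (k %/ D)).
Proof.
move=> D0; apply: (irr_sorted_eq ltn_trans ltnn).
- exact: (sorted_filter ltn_trans _ (iota_ltn_sorted 1 k)).
- by apply: homo_sorted (iota_ltn_sorted 1 _) => x y; rewrite ltn_pmul2l.
move=> x; rewrite mem_filter mem_iota add1n ltnS; apply/andP/mapP.
  case=> /dvdnP[i ->] /andP[xi ik]; exists i; last by rewrite mulnC.
  rewrite mem_iota add1n ltnS leq_divRL // ik andbT.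
  by move: xi; rewrite muln_gt0 => /andP[].
case=> i; rewrite mem_iota add1n ltnS leq_divRL // => /andP[i0 ik] ->.
by rewrite dvdn_mulr // muln_gt0 D0 i0 mulnC.
Qed.

(** * Unitary Ramanujan sums and their series *)

Lemma unitary_unitsE n : (0 < n)%N -> unitary_units n =
  filter (fun j => all (fun q => ~~ (q %| j)%N) (primary_parts n)) (iota 1 n).
Proof.
move=> n0; rewrite /unitary_units list_seqE list_filterE; apply: eq_filter => j.
by rewrite Nat_eqbE ugcd_eq1.
Qed.

Lemma sum_dvdn_zeta_exp n D k : (0 < n)%N -> (D %| n)%N ->
  \sum_(j <- iota 1 n | (D %| j)%N) zeta n ^+ (j * k) =
  if (n %/ D %| k)%N then (n %/ D)%:R else 0.
Proof.
move=> n0 Dn; have D0 : (0 < D)%N by apply: dvdn_gt0 n0 Dn.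
rewrite -big_filter filter_dvdn_iota // big_map.
under eq_bigr do rewrite -mulnA exprM.
exact: sum_prim_root_expM (zeta_exp_prim_root n0 Dn).
Qed.

Lemma prod_dvdn_one_sub_zeta_exp n D : (0 < n)%N -> (D %| n)%N ->
  \prod_(j <- iota 1 n.-1 | (D %| j)%N) (1 - zeta n ^+ j) = (n %/ D)%:R.
Proof.
move=> n0 Dn; have D0 : (0 < D)%N by apply: dvdn_gt0 n0 Dn.
rewrite -big_filter filter_dvdn_iota // divn_pred Dn subn1 big_map.
under eq_bigr do rewrite exprM.
exact: prod_one_sub_prim_root_exp (zeta_exp_prim_root n0 Dn).
Qed.

(* [c*_n(k)] by inclusion-exclusion over the primary parts of [n] (see [toC_cstar]). *)
Definition cstarR n k : R := sieve subR (primary_parts n) 1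
  (fun D => if (n %/ D %| k)%N then (n %/ D)%:R else 0).

Lemma toC_cstar {n} k : (0 < n)%N -> toC (cstar n k) = real_complex R (cstarR n k).
Proof.
move=> n0; have adm := admissible_primary_parts n0.
have /and4P[pw cp _ _] := adm.
rewrite /cstar toC_fold_Cadd unitary_unitsE // big_filter.
under eq_bigr do rewrite toC_zeta_pow multE.
rewrite (eq_bigl (fun j => (1 %| j)%N && all (fun q => ~~ (q %| j)%N) (primary_parts n)));
  last by move=> j; rewrite dvd1n.
rewrite sum_undivided_sieve // /cstarR sieve_raddf.
rewrite (eq_in_sieve _ (fun D =>
  real_complex R (if (n %/ D %| k)%N then (n %/ D)%:R else 0)) adm) // => D Dn.
by rewrite sum_dvdn_zeta_exp //; case: ifP; rewrite ?rmorph_nat ?raddf0.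
Qed.

Lemma fst_cstar n k : (0 < n)%N -> fst (cstar n k) = cstarR n k.
Proof. by move=> n0; have := congr1 (@complex.Re _) (toC_cstar k n0). Qed.

Lemma snd_cstar n k : (0 < n)%N -> snd (cstar n k) = 0.
Proof. by move=> n0; have := congr1 (@complex.Im _) (toC_cstar k n0). Qed.

Lemma sum_multiples_harmonic m N : (0 < m)%N ->
  sum_f_R0 (fun i => Rmult (if (m %| i.+1)%N then INR m else 0) (Rinv (INR i.+1))) N =
  harmonic (N.+1 %/ m).
Proof.
move=> m0; elim: N => [|N IH].
  rewrite /= divnS // div0n addn0; case: ifP => [|_]; last by rewrite /= Rmult_0_l.
  by rewrite dvdn1 => /eqP ->; rewrite /=; lra.
rewrite tech5 IH (divnS N.+1 m0).
case: ifP => mN; last by rewrite add0n Rmult_0_l Rplus_0_r.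
rewrite add1n harmonic_S; congr Rplus.
have q0 : (0 < N.+2 %/ m)%N by rewrite divn_gt0 // dvdn_leq.
have <- : (N.+2 %/ m = (N.+1 %/ m).+1)%N by rewrite (divnS N.+1 m0) mN.
rewrite -{1}(divnK mN) -multE mult_INR Rinv_mult Rmult_comm Rmult_assoc Rinv_l ?Rmult_1_r //.
by apply: not_0_INR; lia.
Qed.

(* Subtracting [harmonic N.+1], which the sieve annihilates, makes every term converge. *)
Lemma cstar_series_re_sieve n N : (1 < n)%N -> cstar_series_re n N =
  sieve subR (primary_parts n) 1 (fun D => harmonic (N.+1 %/ (n %/ D)) - harmonic N.+1).
Proof.
move=> n1; have n0 := ltnW n1; have adm := admissible_primary_parts n0.
rewrite sieve_subD sieve_sub_const.
case E: (primary_parts n) => [|q L]; first by have := primary_parts_neq_nil n1.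
rewrite -E addr0 /cstar_series_re.
rewrite (eq_in_sieve _ (fun D => sum_f_R0 (fun i =>
  Rmult (if (n %/ D %| i.+1)%N then INR (n %/ D) else 0) (Rinv (INR i.+1))) N) adm); last first.
  move=> D Dn; rewrite sum_multiples_harmonic // divn_gt0 ?(dvdn_gt0 n0 Dn) //.
  exact: dvdn_leq.
rewrite sieve_sub_sum_f_R0; apply: PartSum.sum_eq => i _.
rewrite fst_cstar // /cstarR /Rdiv RmultE -sieve_subMr.
by apply: (eq_in_sieve _ _ adm) => D _; case: ifP; rewrite RmultE ?INRE.
Qed.

Lemma cstar_series_re_cv_sieve {n} : (1 < n)%N ->
  Un_cv (cstar_series_re n) (sieve subR (primary_parts n) 1 (fun D => - ln (INR (n %/ D)))).
Proof.
move=> n1; have n0 := ltnW n1; have adm := admissible_primary_parts n0.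
apply: (Un_cv_ext _ _ (fun N => esym (cstar_series_re_sieve n N n1))).
apply: (sieve_sub_cv (fun N D => harmonic (N.+1 %/ (n %/ D)) - harmonic N.+1) _ adm) => D Dn.
have m0 : (0 < n %/ D)%N by rewrite divn_gt0 ?(dvdn_gt0 n0 Dn) // dvdn_leq.
apply: (harmonic_div_cv _ (fun N => N.+1 %/ (n %/ D))%N (ssrnat.ltP m0)) => N.
by split; apply/ssrnat.leP; [rewrite leq_divM | have := ltn_ceil N.+1 m0; lia].
Qed.

Lemma big_seq_single {s : seq nat} x (F : nat -> R) : uniq s -> x \in s ->
  {in s, forall i, i != x -> F i = 0} -> \sum_(i <- s) F i = F x.
Proof.
move=> us xs F0; rewrite (bigD1_seq x) //= big1_seq ?addr0 //.
by move=> i /andP[ix ins]; apply: F0.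
Qed.

Lemma primes_pfactor {p a} : prime p -> (0 < a)%N -> primes (p ^ a) = [:: p].
Proof. by move=> pp a0; rewrite primesX // primes_prime. Qed.

Lemma primes_eq1_part n p : (0 < n)%N -> primes n = [:: p] -> (n`_p)%N = n.
Proof. by move=> n0 E; apply: part_pnat_id; rewrite /pnat n0 E /= inE eqxx. Qed.

Lemma LambdaStarE n : (1 < n)%N ->
  LambdaStar n = if primes n is [:: _] then ln (INR n) else 0.
Proof.
move=> n1; have n0 := ltnW n1.
rewrite /LambdaStar fold_right_RplusE list_seqE.
under eq_bigr do rewrite fold_right_RplusE list_seqE.
under eq_bigr do under eq_bigr do rewrite primebE Nat_eqbE Nat_powE.
case E: (primes n) => [|p [|p' ps]].
- by move/eqP: E; rewrite primes_eq0 ltnNge n1.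
- have pp : prime p by have := mem_head p [::]; rewrite -E mem_primes => /andP[].
  set a := logn p n.
  have a0 : (0 < a)%N by rewrite logn_gt0 E mem_head.
  have nE : n = (p ^ a)%N by rewrite -p_part primes_eq1_part.
  have pn : (p <= n)%N by rewrite {1}nE -{1}(expn1 p) leq_pexp2l // prime_gt0.
  have an : (a <= n)%N by rewrite {1}nE; apply/ltnW/ltn_expl/prime_gt1.
  rewrite (big_seq_single p) ?iota_uniq ?mem_iota ?prime_gt1 //=; last first.
  - move=> p' _ ne; apply: big1_seq => a' /andP[_]; rewrite mem_iota => /andP[a'1 _].
    case: ifP => // /andP[pp' /eqP nE'].
    by have := primes_pfactor pp' a'1; rewrite -nE' E => -[] pE; rewrite pE eqxx in ne.
  - by rewrite add2n ltnS ltnW.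
  rewrite (big_seq_single a) ?iota_uniq ?mem_iota ?a0 /= ?add1n ?ltnS //; last first.
    move=> a' _ ne; case: ifP => // /andP[_ /eqP nE'].
    by rewrite /a nE' pfactorK // eqxx in ne.
  rewrite pp -nE eqxx /= {1}nE -Nat_powE pow_INR ln_pow //.
  by apply/lt_0_INR/ssrnat.ltP/prime_gt0.
- rewrite big1_seq // => p0 /andP[_ _]; apply: big1_seq => a' /andP[_].
  rewrite mem_iota => /andP[a'1 _]; case: ifP => // /andP[pp' /eqP nE'].
  by have := primes_pfactor pp' a'1; rewrite -nE' E.
Qed.

Lemma ln_INR_mul x y : (0 < x)%N -> (0 < y)%N ->
  ln (INR (x * y)) = ln (INR x) + ln (INR y).
Proof.
by move=> x0 y0; rewrite -multE mult_INR ln_mult //; apply/lt_0_INR/ssrnat.ltP.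
Qed.

Lemma sieve_ln_div n : (1 < n)%N ->
  sieve subR (primary_parts n) 1 (fun D => ln (INR (n %/ D))) = LambdaStar n.
Proof.
move=> n1; have n0 := ltnW n1; have adm := admissible_primary_parts n0.
rewrite LambdaStarE //; case E: (primes n) => [|p [|p' ps]].
- by move/eqP: E; rewrite primes_eq0 ltnNge n1.
- have -> : primary_parts n = [:: n] by rewrite /primary_parts E /= primes_eq1_part.
  by rewrite /= mul1n divn1 divnn n0 ln_1 subr0.
rewrite (eq_in_sieve _ (fun D => ln (INR n) + - ln (INR D)) adm); last first.
  move=> D Dn; have D0 : (0 < D)%N by apply: dvdn_gt0 n0 Dn.
  have nD0 : (0 < n %/ D)%N by rewrite divn_gt0 // dvdn_leq.
  by rewrite -{2}(divnK Dn) ln_INR_mul // addrK.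
have EL : primary_parts n = (n`_p)%N :: map (fun q : nat => n`_q)%N (p' :: ps).
  by rewrite /primary_parts E.
rewrite EL in adm *; rewrite sieve_subD sieve_sub_const sieve_subN.
rewrite (sieve_sub_additive _ adm) // ?oppr0 ?addr0 // => x xn.
by rewrite ln_INR_mul ?part_gt0 ?(dvdn_gt0 n0 xn).
Qed.

Lemma one_sub_zeta_exp_neq0 n j : (0 < j)%N -> (j < n)%N -> 1 - zeta n ^+ j != 0.
Proof.
move=> j0 jn; rewrite subr_eq0 eq_sym -(prim_order_dvd (zeta_prim_root (ltn_trans j0 jn))).
by apply/negP => /(dvdn_leq j0); rewrite leqNgt jn.
Qed.

Local Notation divR := (fun a b : R => a / b).

(* [Phi*_n(1)] by inclusion-exclusion over the primary parts of [n]. *)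
Definition PhiR n : R := sieve divR (primary_parts n) 1 (fun D => (n %/ D)%:R).

(* The index [j = n] is excluded from the unitary units since every primary part divides [n];
   dropping it avoids the zero factor [1 - zeta_n^n]. *)
Lemma toC_PhiStar_at1 {n} : (1 < n)%N -> toC (PhiStar_at1 n) = real_complex R (PhiR n).
Proof.
move=> n1; have n0 := ltnW n1; have adm := admissible_primary_parts n0.
have /and4P[pw cp _ _] := adm.
rewrite /PhiStar_at1 toC_fold_Cmul unitary_unitsE //.
under eq_bigr do rewrite toC_sub toC1 toC_zeta_pow.
have -> : iota 1 n = rcons (iota 1 n.-1) n.
  by rewrite -{1}(prednK n0) -[n.-1.+1]addn1 iotaD cats1 add1n prednK.
rewrite filter_rcons.
have -> : all (fun q => ~~ (q %| n)%N) (primary_parts n) = false.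
  case E: (primary_parts n) (primary_parts_neq_nil n1) => [//|q L] _.
  by rewrite /= primary_parts_dvdn // E mem_head.
rewrite big_filter (eq_bigl (fun j => (1 %| j)%N &&
  all (fun q => ~~ (q %| j)%N) (primary_parts n))) => [|j]; last by rewrite dvd1n.
rewrite prod_undivided_sieve //; last first.
  move=> j; rewrite mem_iota add1n prednK // => /andP[j0 jn].
  exact: one_sub_zeta_exp_neq0.
rewrite /PhiR sieve_fmorph.
rewrite (eq_in_sieve _ (fun D => real_complex R (n %/ D)%:R) adm) // => D Dn.
by rewrite prod_dvdn_one_sub_zeta_exp // rmorph_nat.
Qed.

Lemma PhiR_gt0_ln {n} : (0 < n)%N ->
  Rlt 0 (PhiR n) /\ ln (PhiR n) = sieve subR (primary_parts n) 1 (fun D => ln (INR (n %/ D))).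
Proof.
move=> n0; have adm := admissible_primary_parts n0.
have := @sieve_morph n _ _ divR subR ln (Rlt 0) _ _ (fun D => (n %/ D)%:R) adm; case.
- move=> D Dn; rewrite -INRE; apply/lt_0_INR/ssrnat.ltP.
  by rewrite divn_gt0 ?(dvdn_gt0 n0 Dn) // dvdn_leq.
- move=> a b a0 b0; split; first exact/Rmult_lt_0_compat/Rinv_0_lt_compat.
  by rewrite /= ln_mult ?ln_Rinv ?RminusE //; exact: Rinv_0_lt_compat.
move=> PhiR0 ->; split => //.
by apply: (eq_in_sieve _ _ adm) => D _; rewrite INRE.
Qed.

Lemma cstar_series_re_cv n : (1 < n)%coq_nat ->
  Un_cv (cstar_series_re n) (Ropp (LambdaStar n)).
Proof.
move=> /ssrnat.ltP n1; have := cstar_series_re_cv_sieve n1.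
by rewrite sieve_subN sieve_ln_div.
Qed.

Lemma cstar_series_im_cv n : (1 < n)%coq_nat -> Un_cv (cstar_series_im n) R0.
Proof.
move=> /ssrnat.ltP/ltnW n0; apply: (Un_cv_ext (fun _ => R0)).
  move=> N; rewrite /cstar_series_im; symmetry; apply: sum_eq_R0 => i _.
  by rewrite snd_cstar // /Rdiv Rmult_0_l.
by move=> eps eps0; exists 0%N => N _; rewrite /R_dist Rminus_0_r Rabs_R0.
Qed.

Lemma PhiStar_at1_im n : (1 < n)%coq_nat -> snd (PhiStar_at1 n) = R0.
Proof. by move=> /ssrnat.ltP n1; have := congr1 (@complex.Im _) (toC_PhiStar_at1 n1). Qed.

Lemma PhiStar_at1_re n : (1 < n)%coq_nat -> fst (PhiStar_at1 n) = PhiR n.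
Proof. by move=> /ssrnat.ltP n1; have := congr1 (@complex.Re _) (toC_PhiStar_at1 n1). Qed.

Lemma PhiStar_at1_re_gt0 n : (1 < n)%coq_nat -> Rlt 0 (fst (PhiStar_at1 n)).
Proof.
move=> n1; have /ssrnat.ltP/ltnW n0 := n1.
by rewrite PhiStar_at1_re //; have [] := PhiR_gt0_ln n0.
Qed.

Lemma ln_PhiStar_at1 n : (1 < n)%coq_nat -> ln (fst (PhiStar_at1 n)) = LambdaStar n.
Proof.
move=> n1; have /ssrnat.ltP n1' := n1.
by rewrite PhiStar_at1_re // (PhiR_gt0_ln (ltnW n1')).2 sieve_ln_div.
Qed.

End UnitaryRamanujan.

Import UnitaryRamanujan.

Theorem mainTheorem17 (n : nat) (hn : (1 < n)%nat) :
  Un_cv (cstar_series_re n) (- LambdaStar n) /\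
  Un_cv (cstar_series_im n) 0 /\
  snd (PhiStar_at1 n) = 0 /\
  0 < fst (PhiStar_at1 n) /\
  ln (fst (PhiStar_at1 n)) = LambdaStar n.
Proof.
  split; [|split; [|split; [|split]]].
  - exact (cstar_series_re_cv n hn).
  - exact (cstar_series_im_cv n hn).
  - exact (PhiStar_at1_im n hn).
  - exact (PhiStar_at1_re_gt0 n hn).
  - exact (ln_PhiStar_at1 n hn).
Qed.
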